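(* Let $P,Q$ be orthogonal projections on an $N$-dimensional inner product space $V$ with ranks $p,q$ respectively. For $\lambda\in\mathbb{R}$ let $m(\lambda)$ be the multiplicity of $\lambda$ as an eigenvalue of $P+Q$ ($m(\lambda)=0$ if $\lambda$ is not an eigenvalue). Then: (i) $m(\lambda)>0$ implies $\lambda\in[0,2]$; (ii) $\sum_{\lambda\in[0,2]}m(\lambda)=N$; (iii) $m(1)\ge|p-q|$; (iv) for $\lambda\in(0,2)$, $m(\lambda)=m(2-\lambda)$; (v) $m(0)-m(2)=N-p-q$. Conversely, if $0\le p,q\le N$ are integers and $m:\mathbb{R}\to\mathbb{N}_0$ satisfies (i)–(v), then there exist orthogonal projections $P,Q$ on an $N$-dimensional space, of ranks $p,q$, such that $m$ is the eigenvalue multiplicity function of $P+Q$. *)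

From mathcomp Require Import all_boot all_order all_algebra.
From mathcomp Require Import reals.
Set Implicit Arguments. Unset Strict Implicit. Unset Printing Implicit Defensive.
Import Order.TTheory GRing.Theory Num.Theory.
Local Open Scope ring_scope.

(* Model of an N-dimensional real inner product space: R^N (row vectors)
   with the standard inner product; linear maps are N x N matrices. *)

Definition orth_proj (R : realType) (N : nat) (P : 'M[R]_N) : Prop :=
  P^T = P /\ P *m P = P.

Definition mult (R : realType) (N : nat) (A : 'M[R]_N) (l : R) : nat :=
  \rank (eigenspace A l).

(* sum_{l in [0,2]} m(l) = N, for m : R -> nat  (a sum of naturals over an
   infinite index set: it equals N iff the support in [0,2] is finite and the
   finite sum is N). *)
Definition sum_on_02_eq (R : realType) (m : R -> nat) (N : nat) : Prop :=
  exists s : seq R,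
    [/\ uniq s, (forall l, l \in s -> 0 <= l <= 2),
        (forall l, 0 <= l <= 2 -> (0 < m l)%N -> l \in s)
      & (\sum_(l <- s) m l)%N = N].

Definition mult_conditions (R : realType) (N p q : nat) (m : R -> nat) : Prop :=
  [/\ (forall l : R, (0 < m l)%N -> 0 <= l <= 2),
      sum_on_02_eq m N,
      `|(p%:Z - q%:Z)%R| <= (m 1)%:Z,
      (forall l : R, 0 < l < 2 -> m l = m (2 - l))
    & ((m 0)%:Z - (m 2)%:Z = N%:Z - p%:Z - q%:Z)%R].

From mathcomp Require Import all_boot all_order all_algebra.
From mathcomp Require Import reals complex.
From mathcomp Require Import ring lra zify.
Set Implicit Arguments. Unset Strict Implicit. Unset Printing Implicit Defensive.
Import Order.TTheory GRing.Theory Num.Theory.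
Local Open Scope ring_scope.

(* The quadratic form of P + Q is v |-> |vP|^2 + |vQ|^2, which puts the
   spectrum in [0, 2] and identifies the 0- and 2-eigenspaces with
   ker P :&: ker Q and im P :&: im Q; a dimension count then gives (v), and
   im P :&: ker Q lies in the 1-eigenspace, which gives (iii).  Since P + Q is
   symmetric its eigenspaces fill the space (ii).  The difference D = P - Q
   anticommutes with P + Q - 1, so it maps the l-eigenspace into the
   (2 - l)-eigenspace, injectively because D^2 = l (2 - l) there (iv).
   Conversely, a function satisfying (i)-(v) is the multiplicity function of
   an orthogonal direct sum of scalar blocks for the eigenvalues 0, 1, 2 and
   of 2 x 2 blocks spanned by two lines at angle theta, whose sum has
   eigenvalues 1 +- cos theta. *)

Section SumOfProjections.
Variables (R : realType) (n : nat).
Implicit Types (P Q : 'M[R]_n) (v : 'rV[R]_n).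

Definition sqnorm v : R := (v *m v^T) 0 0.

Lemma sqnormE v : sqnorm v = \sum_i v 0 i ^+ 2.
Proof. by rewrite /sqnorm mxE; apply: eq_bigr => i _; rewrite mxE expr2. Qed.

Lemma sqnorm_ge0 v : 0 <= sqnorm v.
Proof. by rewrite sqnormE sumr_ge0 // => i _; apply: sqr_ge0. Qed.

Lemma sqnorm_eq0 v : sqnorm v = 0 -> v = 0.
Proof.
rewrite sqnormE => /psumr_eq0P v0; apply/rowP => i; rewrite mxE.
by apply/eqP; rewrite -sqrf_eq0; apply/eqP/v0 => // j _; apply: sqr_ge0.
Qed.

Lemma sqnorm_gt0 v : v != 0 -> 0 < sqnorm v.
Proof.
by move=> v0; rewrite lt_def sqnorm_ge0 andbT; apply: contra v0 => /eqP/sqnorm_eq0->.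
Qed.

Lemma orth_proj_form P v : orth_proj P -> (v *m P *m v^T) 0 0 = sqnorm (v *m P).
Proof. by case=> PT PP; rewrite /sqnorm trmx_mul PT !mulmxA -(mulmxA v P P) PP. Qed.

Lemma orth_projC P : orth_proj P -> orth_proj (1%:M - P).
Proof.
case=> PT PP; split; first by rewrite linearB /= trmx1 PT.
by rewrite !(mulmxBl, mulmxBr, mul1mx, mulmx1) PP subrr subr0.
Qed.

Lemma sqnorm_proj_compl P v : orth_proj P ->
  sqnorm (v - v *m P) = sqnorm v - sqnorm (v *m P).
Proof.
move=> oP; have -> : v - v *m P = v *m (1%:M - P) by rewrite mulmxBr mulmx1.
rewrite -(orth_proj_form v (orth_projC oP)) -(orth_proj_form v oP).
rewrite mulmxBr mulmx1 mulmxBl /sqnorm.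
by set a := v *m v^T; set b := _ *m v^T; rewrite !mxE.
Qed.

Lemma sqnorm_proj_le P v : orth_proj P -> sqnorm (v *m P) <= sqnorm v.
Proof. by move=> oP; rewrite -subr_ge0 -sqnorm_proj_compl // sqnorm_ge0. Qed.

Lemma idem_mulmx_sub P v : P *m P = P -> (v <= P)%MS -> v *m P = v.
Proof. by move=> PP /submxP [w ->]; rewrite -mulmxA PP. Qed.

Lemma idem_add_sub_mul P Q : P *m P = P -> Q *m Q = Q ->
  (P - Q) *m (P + Q) = 2 *: (P - Q) - (P + Q) *m (P - Q).
Proof.
move=> PP QQ; rewrite !(mulmxDl, mulmxDr, mulmxN, mulNmx) PP QQ.
by apply/matrixP => i j; rewrite !mxE; ring.
Qed.

Lemma idem_sub_sqr P Q : P *m P = P -> Q *m Q = Q ->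
  (P - Q) *m (P - Q) = 2 *: (P + Q) - (P + Q) *m (P + Q).
Proof.
move=> PP QQ; rewrite !(mulmxDl, mulmxDr, mulmxN, mulNmx) PP QQ.
by apply/matrixP => i j; rewrite !mxE; ring.
Qed.

Lemma idem_cap_kermx_sub_eigenspace1 P Q : P *m P = P ->
  (P :&: kermx Q <= eigenspace (P + Q) 1)%MS.
Proof.
move=> PP; apply/row_subP => i; set v := row i _.
have /andP[vP /sub_kermxP vQ] : (v <= P)%MS && (v <= kermx Q)%MS.
  by rewrite -sub_capmx row_sub.
by apply/eigenspaceP; rewrite mulmxDr idem_mulmx_sub // vQ addr0 scale1r.
Qed.

Lemma idem_rank_subn_le_mult1 P Q : P *m P = P ->
  (\rank P - \rank Q <= mult (P + Q) 1)%N.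
Proof.
move=> PP; have := mxrank_sum_cap P (kermx Q); rewrite mxrank_ker.
have := rank_leq_col (P + kermx Q)%MS; have := rank_leq_col Q.
have := mxrankS (idem_cap_kermx_sub_eigenspace1 Q PP); rewrite /mult.
by set e := \rank (eigenspace _ _); set a := \rank (_ + _)%MS; lia.
Qed.

Lemma idem_mult_le_mult_sym P Q l : P *m P = P -> Q *m Q = Q ->
  l != 0 -> l != 2 -> (mult (P + Q) l <= mult (P + Q) (2 - l))%N.
Proof.
move=> PP QQ l0 l2; set A := P + Q; set E := eigenspace A l; set D := P - Q.
have EA : E *m A = l *: E by apply/eigenspaceP.
have ED : (E *m D <= eigenspace A (2 - l))%MS.
  apply/eigenspaceP; rewrite -mulmxA idem_add_sub_mul // mulmxBr -scalemxAr.
  by rewrite mulmxA EA -scalemxAl scalerBl.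
have EDD : E *m D *m D = (l * (2 - l)) *: E.
  rewrite -mulmxA idem_sub_sqr // mulmxBr -scalemxAr EA mulmxA EA -scalemxAl EA.
  by rewrite !scalerA -scalerBl; congr (_ *: _); ring.
have lN0 : l * (2 - l) != 0 by rewrite mulf_neq0 // subr_eq0 eq_sym.
rewrite /mult -/A -/E -(eqmx_scale E lN0) -EDD.
exact: leq_trans (mxrankM_maxl _ _) (mxrankS ED).
Qed.

Lemma idem_mult_sym P Q l : P *m P = P -> Q *m Q = Q ->
  l != 0 -> l != 2 -> mult (P + Q) l = mult (P + Q) (2 - l).
Proof.
move=> PP QQ l0 l2; apply/eqP; rewrite eqn_leq idem_mult_le_mult_sym //=.
by rewrite -{2}[l](subKr 2) idem_mult_le_mult_sym //;
  [apply: contra_neq l2 | apply: contra_neq l0] => ?; lra.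
Qed.

Variables P Q : 'M[R]_n.
Hypotheses (oP : orth_proj P) (oQ : orth_proj Q).

Lemma sum_proj_form v :
  (v *m (P + Q) *m v^T) 0 0 = sqnorm (v *m P) + sqnorm (v *m Q).
Proof. by rewrite mulmxDr mulmxDl [(_ + _ : 'M[R]_1) _ _]mxE !orth_proj_form. Qed.

Lemma sum_proj_eigen_range v l : v *m (P + Q) = l *: v -> v != 0 -> 0 <= l <= 2.
Proof.
move=> vA v0; have := sum_proj_form v.
rewrite vA -scalemxAl [(_ *: _ : 'M[R]_1) _ _]mxE -/(sqnorm v) => E.
have := sqnorm_gt0 v0; have := sqnorm_ge0 (v *m P); have := sqnorm_ge0 (v *m Q).
have := sqnorm_proj_le v oP; have := sqnorm_proj_le v oQ.
by move=> *; apply/andP; split; nra.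
Qed.

Lemma sum_proj_kernel v : v *m (P + Q) = 0 -> v *m P = 0 /\ v *m Q = 0.
Proof.
move=> vA; have := sum_proj_form v; rewrite vA mul0mx mxE => E.
have := sqnorm_ge0 (v *m P); have := sqnorm_ge0 (v *m Q).
by split; apply: sqnorm_eq0; lra.
Qed.

Lemma sum_proj_eigen2 v : v *m (P + Q) = 2 *: v -> v *m P = v /\ v *m Q = v.
Proof.
move=> vA; have := sum_proj_form v.
rewrite vA -scalemxAl [(_ *: _ : 'M[R]_1) _ _]mxE -/(sqnorm v) => E.
have := sqnorm_proj_le v oP; have := sqnorm_proj_le v oQ.
have := sqnorm_proj_compl v oP; have := sqnorm_proj_compl v oQ.
move=> eQ eP lQ lP; split; apply/eqP; rewrite eq_sym -subr_eq0; apply/eqP/sqnorm_eq0; lra.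
Qed.

Lemma mult_sum_proj_range l : (0 < mult (P + Q) l)%N -> 0 <= l <= 2.
Proof.
rewrite /mult lt0n mxrank_eq0 => /eigenvalueP [v vA v0].
exact: sum_proj_eigen_range vA v0.
Qed.

Lemma eigenspace_sum_proj0 : (eigenspace (P + Q) 0 :=: kermx (row_mx P Q))%MS.
Proof.
apply/eqmxP/andP; split; apply/row_subP => i.
  have /eigenspaceP := row_sub i (eigenspace (P + Q) 0); rewrite scale0r.
  by case/sum_proj_kernel => vP vQ; apply/sub_kermxP; rewrite mul_mx_row vP vQ row_mx0.
have /sub_kermxP := row_sub i (kermx (row_mx P Q)).
rewrite mul_mx_row => /eqP; rewrite row_mx_eq0 => /andP[/eqP vP /eqP vQ].
by apply/eigenspaceP; rewrite mulmxDr vP vQ addr0 scale0r.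
Qed.

Lemma eigenspace_sum_proj2 : (eigenspace (P + Q) 2 :=: P :&: Q)%MS.
Proof.
have [[_ PP] [_ QQ]] := (oP, oQ).
apply/eqmxP/andP; split; apply/row_subP => i.
  have /eigenspaceP/sum_proj_eigen2 [vP vQ] := row_sub i (eigenspace (P + Q) 2).
  by rewrite sub_capmx -{1}vP -{2}vQ !submxMl.
have /andP[vP vQ] : (row i (P :&: Q) <= P)%MS && (row i (P :&: Q) <= Q)%MS.
  by rewrite -sub_capmx row_sub.
by apply/eigenspaceP; rewrite mulmxDr !idem_mulmx_sub // scaler_nat mulr2n.
Qed.

Lemma mult_sum_proj0_2 :
  (mult (P + Q) 0 + \rank P + \rank Q = n + mult (P + Q) 2)%N.
Proof.
rewrite /mult eigenspace_sum_proj0 eigenspace_sum_proj2 mxrank_ker -mxrank_tr.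
have [[PT _] [QT _]] := (oP, oQ).
rewrite tr_row_mx PT QT -(addsmxE P Q).
have := mxrank_sum_cap P Q; have := rank_leq_col (P + Q)%MS; lia.
Qed.

End SumOfProjections.

Lemma sum_filter_pos (T : Type) (s : seq T) (m : T -> nat) :
  (\sum_(x <- [seq x <- s | (0 < m x)%N]) m x = \sum_(x <- s) m x)%N.
Proof. by rewrite big_filter big_rmcond // => x; rewrite lt0n negbK => /eqP. Qed.

Lemma eq_sum_support (T : eqType) (m : T -> nat) (s t : seq T) :
  uniq s -> uniq t -> (forall x, (0 < m x)%N -> (x \in s) = (x \in t)) ->
  (\sum_(x <- s) m x = \sum_(x <- t) m x)%N.
Proof.
move=> us ut st; rewrite -sum_filter_pos -[RHS]sum_filter_pos.
apply/perm_big/uniq_perm; rewrite ?filter_uniq // => x.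
by rewrite !mem_filter; case: ltnP => //= /st.
Qed.

Lemma sum_mul_eq_mem (T : eqType) (m : T -> nat) (t : seq T) (l : T) : uniq t ->
  (\sum_(x <- t) m x * (l == x))%N = if l \in t then m l else 0%N.
Proof.
elim: t => [|x t IHt] /=; first by rewrite big_nil.
case/andP => xt tU; rewrite big_cons IHt // inE.
have [->|lx] := eqVneq l x; last by rewrite muln0.
by rewrite (negbTE xt) muln1 addn0.
Qed.

Lemma rank_sum_eigenspace (F : fieldType) n (A : 'M[F]_n) (rs : seq F) : uniq rs ->
  \rank (\sum_(r <- rs) eigenspace A r)%MS = (\sum_(r <- rs) \rank (eigenspace A r))%N.
Proof.
move=> rsU; rewrite (big_nth 0) big_mkord [RHS](big_nth 0) big_mkord.
have /mxdirectP -> // : mxdirect (\sum_(i < size rs) eigenspace A rs`_i).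
apply: mxdirect_sum_eigenspace => i j _ _ rsij; apply: val_inj.
by apply: uniqP rsij; rewrite ?inE.
Qed.

Lemma symmetric_eigenspaces_full (R : realType) n (A : 'M[R]_n) : A^T = A ->
  exists2 rs : seq R, uniq rs & (1%:M <= \sum_(r <- rs) eigenspace A r)%MS.
Proof.
move=> AT; pose toC := real_complex R; pose B := map_mx toC A.
have Bsym : B \is symmetricmx.
  by apply/is_hermitianmxP; rewrite expr0 scale1r map_mx_id // /B map_trmx AT.
have Breal : B \is a realmx by apply/mxOverP => i j; rewrite mxE complex_real.
have /orthomx_spectralP BE := symmetric_normalmx Bsym Breal.
have dreal := hermitian_spectral_diag_real (realsym_hermsym Bsym Breal).
set U := spectralmx B in BE; set d := spectral_diag B in BE dreal.
exists (undup [seq complex.Re (d 0 i) | i <- enum 'I_n]); first exact: undup_uniq.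
rewrite -(map_submx toC) map_mx1.
apply: submx_trans (_ : U <= _)%MS; first by rewrite sub1mx row_full_unit spectral_unit.
apply/row_subP => i.
have Ui : (row i U <= eigenspace B (d 0 i))%MS.
  apply/eigenspaceP; rewrite -row_mul BE !mulmxA mulmxV ?spectral_unit // mul1mx.
  by rewrite mul_diag_mx; apply/rowP => j; rewrite !mxE.
apply: submx_trans Ui _.
have dr : d 0 i \is Num.real by move/mxOverP: dreal; apply.
rewrite -(RRe_real dr) -map_eigenspace map_submx.
rewrite (bigD1_seq (complex.Re (d 0 i))) ?undup_uniq ?addsmxSl //=.
by rewrite mem_undup; apply: map_f; rewrite mem_enum.
Qed.

Section FullEigenspaces.
Variables (R : realType) (n : nat) (A : 'M[R]_n) (rs : seq R).
Hypotheses (rsU : uniq rs) (rs_full : (1%:M <= \sum_(r <- rs) eigenspace A r)%MS).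

Lemma rank_sum_eigenspace_full : \rank (\sum_(r <- rs) eigenspace A r)%MS = n.
Proof. by apply/eqP; rewrite -[_ == _]/(row_full _) -sub1mx. Qed.

Lemma sum_mult_full : (\sum_(r <- rs) mult A r)%N = n.
Proof. by rewrite /mult -rank_sum_eigenspace // rank_sum_eigenspace_full. Qed.

Lemma mult_full_mem l : (0 < mult A l)%N -> l \in rs.
Proof.
move=> Al; apply/negPn/negP => l_rs.
have := rank_leq_col (\sum_(r <- l :: rs) eigenspace A r)%MS.
rewrite rank_sum_eigenspace /= ?l_rs // big_cons -rank_sum_eigenspace //.
by rewrite rank_sum_eigenspace_full -/(mult A l); lia.
Qed.

End FullEigenspaces.

Lemma sum_on_02_eq_of_support (R : realType) (m : R -> nat) (s : seq R) N :
  uniq s -> (forall l, (0 < m l)%N -> 0 <= l <= 2) ->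
  (forall l, (0 < m l)%N -> l \in s) -> (\sum_(l <- s) m l)%N = N ->
  sum_on_02_eq m N.
Proof.
move=> sU m02 ms sN; exists [seq l <- s | (0 < m l)%N]; split.
- exact: filter_uniq.
- by move=> l; rewrite mem_filter => /andP[/m02].
- by move=> l _ ml; rewrite mem_filter ml ms.
- by rewrite sum_filter_pos.
Qed.

Theorem sum_proj_mult_conditions (R : realType) n (P Q : 'M[R]_n) :
  orth_proj P -> orth_proj Q -> mult_conditions n (\rank P) (\rank Q) (mult (P + Q)).
Proof.
move=> oP oQ; have [[PT PP] [QT QQ]] := (oP, oQ).
have [rs rsU rs_full] : exists2 rs : seq R, uniq rs &
    (1%:M <= \sum_(r <- rs) eigenspace (P + Q) r)%MS.
  by apply: symmetric_eigenspaces_full; rewrite linearD /= PT QT.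
split.
- exact: mult_sum_proj_range.
- apply: (sum_on_02_eq_of_support rsU (mult_sum_proj_range oP oQ)).
    by move=> l; apply: mult_full_mem.
  exact: sum_mult_full.
- have := idem_rank_subn_le_mult1 Q PP; have := idem_rank_subn_le_mult1 P QQ.
  by rewrite addrC; set e := mult _ _; lia.
- by move=> l /andP[l0 l2]; apply: idem_mult_sym; rewrite // ?(gt_eqF l0) ?(lt_eqF l2).
- by have := mult_sum_proj0_2 oP oQ; lia.
Qed.

Lemma det_mx22 (F : comNzRingType) (A : 'M[F]_2) :
  \det A = A 0 0 * A 1 1 - A 0 1 * A 1 0.
Proof.
rewrite (expand_det_row _ 0) !big_ord_recl big_ord0 addr0 /cofactor !det_mx11.
rewrite !mxE /= expr0 expr1 mul1r mulN1r mulrN.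
by congr (A _ _ * A _ _ - A _ _ * A _ _); apply: val_inj.
Qed.

Lemma rank_kermx22 (F : fieldType) (K : 'M[F]_2) :
  K != 0 -> \rank (kermx K) = (\det K == 0).
Proof.
move=> K0; rewrite mxrank_ker; have r2 := rank_leq_row K.
have rK : (0 < \rank K)%N by rewrite lt0n mxrank_eq0.
have [det0|detN0] := eqVneq (\det K) 0.
  suff : \rank K != 2 by move: r2 rK; case: (\rank K) => [|[|[]]].
  by rewrite -[_ == _]/(row_free K) row_free_unit unitmxE det0 unitr0.
by rewrite mxrank_unit ?subnn // unitmxE unitfE.
Qed.

Section Realization.
Variable R : realType.

Definition realizable (N p q : nat) (f : R -> nat) : Prop :=
  exists P Q : 'M[R]_N,
    [/\ orth_proj P, orth_proj Q, \rank P = p, \rank Q = q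
      & forall l, mult (P + Q) l = f l].

Lemma realizable_eq N p q f N' p' q' g : realizable N p q f ->
  N = N' -> p = p' -> q = q' -> (forall l, f l = g l) -> realizable N' p' q' g.
Proof.
move=> [P [Q [oP oQ rP rQ PQf]]] <- <- <- fg.
by exists P, Q; split=> // l; rewrite PQf.
Qed.

Lemma realizable0 : realizable 0 0 0 (fun=> 0%N).
Proof.
have o0 : orth_proj (0 : 'M[R]_0) by split; rewrite ?trmx0 ?mul0mx.
exists 0, 0; split; rewrite ?mxrank0 // => l.
by apply/eqP; rewrite -leqn0 rank_leq_row.
Qed.

Lemma orth_proj_block N1 N2 (P1 : 'M[R]_N1) (P2 : 'M[R]_N2) :
  orth_proj P1 -> orth_proj P2 -> orth_proj (block_mx P1 0 0 P2).
Proof.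
case=> P1T P1P [P2T P2P]; split; first by rewrite tr_block_mx P1T P2T !trmx0.
by rewrite mulmx_block !mulmx0 !mul0mx !addr0 !add0r P1P P2P.
Qed.

Lemma mult_block N1 N2 (A : 'M[R]_N1) (B : 'M[R]_N2) l :
  mult (block_mx A 0 0 B) l = (mult A l + mult B l)%N.
Proof.
rewrite /mult /eigenspace !mxrank_ker (scalar_mx_block N1 N2 l) opp_block_mx.
rewrite add_block_mx !oppr0 !addr0 rank_diag_block_mx.
have := rank_leq_row (A - l%:M); have := rank_leq_row (B - l%:M).
by set a := \rank (A - _); set b := \rank (B - _); lia.
Qed.

Lemma realizable_add N1 N2 p1 p2 q1 q2 f1 f2 :
  realizable N1 p1 q1 f1 -> realizable N2 p2 q2 f2 ->
  realizable (N1 + N2) (p1 + p2) (q1 + q2) (fun l => f1 l + f2 l)%N.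
Proof.
move=> [P1 [Q1 [oP1 oQ1 rP1 rQ1 f1E]]] [P2 [Q2 [oP2 oQ2 rP2 rQ2 f2E]]].
exists (block_mx P1 0 0 P2), (block_mx Q1 0 0 Q2); split.
- exact: orth_proj_block.
- exact: orth_proj_block.
- by rewrite rank_diag_block_mx rP1 rP2.
- by rewrite rank_diag_block_mx rQ1 rQ2.
- by move=> l; rewrite add_block_mx !addr0 mult_block f1E f2E.
Qed.

Lemma realizable_muln k N p q f : realizable N p q f ->
  realizable (k * N) (k * p) (k * q) (fun l => k * f l)%N.
Proof.
move=> rf; elim: k => [|k IHk].
  by apply: (realizable_eq realizable0) => // l; rewrite mul0n.
by apply: (realizable_eq (realizable_add rf IHk)) => // l; rewrite mulSn.
Qed.

Lemma mult_scalar k (x l : R) :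
  mult (x%:M : 'M[R]_k) l = (k * (l == x))%N.
Proof.
rewrite /mult /eigenspace mxrank_ker -[x%:M]scalemx1 -[l%:M]scalemx1 -scalerBl.
have [->|lx] := eqVneq l x; first by rewrite subrr scale0r mxrank0 subn0 muln1.
by rewrite eqmx_scale ?mxrank1 ?subnn ?muln0 // subr_eq0 eq_sym.
Qed.

Lemma realizable_scalar k (a b : bool) :
  realizable k (a * k)%N (b * k)%N (fun l => (k * (l == a%:R + b%:R)%R)%N).
Proof.
have oS (c : bool) : orth_proj ((c%:R : R)%:M : 'M[R]_k).
  split; first by rewrite tr_scalar_mx.
  by rewrite -scalar_mxM; case: c; rewrite ?mulr1n ?mulr0n ?mulr1 ?mulr0.
have rS (c : bool) : \rank ((c%:R : R)%:M : 'M[R]_k) = (c * k)%N.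
  by case: c; rewrite ?mulr1n ?mxrank1 ?mul1n // mulr0n -scalemx1 scale0r mxrank0.
exists a%:R%:M, b%:R%:M; split=> // l.
have -> : (a%:R%:M + b%:R%:M : 'M[R]_k) = (a%:R + b%:R)%:M.
  by apply/matrixP => i j; rewrite !mxE mulrnDl.
exact: mult_scalar.
Qed.

Lemma orth_proj_rank1 N (u : 'rV[R]_N) : u *m u^T = 1%:M ->
  orth_proj (u^T *m u) /\ \rank (u^T *m u) = 1%N.
Proof.
move=> uu; split.
  by split; rewrite ?trmx_mul ?trmxK // mulmxA -(mulmxA u^T) uu mulmx1.
have u0 : u != 0.
  apply: contra_eq_neq uu => ->.
  by rewrite mul0mx eq_sym -[_ == _]/(1 == 0 :> 'M_1) oner_eq0.
apply/eqP; rewrite eqn_leq (leq_trans (mxrankM_maxr _ _) (rank_leq_row _)) /=.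
by have := mxrankM_maxr u (u^T *m u); rewrite mulmxA uu mul1mx rank_rV u0.
Qed.

Lemma realizable_pair (x : R) : 0 < x < 1 ->
  realizable 2 1 1 (fun l => (l == x) + (l == (2 - x)%R))%N.
Proof.
move=> /andP[x0 x1]; set c := 1 - x; set s := Num.sqrt (1 - c ^+ 2).
have s2 : s ^+ 2 = 1 - c ^+ 2 by rewrite sqr_sqrtr // /c; nra.
have s0 : 0 < s by rewrite sqrtr_gt0 /c; nra.
(* Unit vectors with inner product c, so that P + Q has eigenvalues 1 +- c. *)
pose e : 'rV[R]_2 := \row_j (j == 0)%:R.
pose u : 'rV[R]_2 := \row_j (if j == 0 then c else s).
have [oP rP] : orth_proj (e^T *m e) /\ \rank (e^T *m e) = 1%N.
  apply: orth_proj_rank1; apply/matrixP => i j.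
  rewrite !ord1 !mxE !big_ord_recl big_ord0 /= !mxE /=.
  by rewrite mul1r mul0r !addr0.
have [oQ rQ] : orth_proj (u^T *m u) /\ \rank (u^T *m u) = 1%N.
  apply: orth_proj_rank1; apply/matrixP => i j.
  rewrite !ord1 !mxE !big_ord_recl big_ord0 /= !mxE /=.
  by rewrite addr0 -!expr2 s2 addrC subrK.
exists (e^T *m e), (u^T *m u); split=> // l.
rewrite /mult /eigenspace rank_kermx22; last first.
  apply/negP => /eqP/matrixP/(_ 0 1); rewrite !mxE !big_ord_recl !big_ord0 /= !mxE /=.
  rewrite mulr0n !addr0 mul1r add0r subr0 => /eqP.
  by rewrite mulf_eq0 (gt_eqF s0) orbF /c subr_eq0 gt_eqF.
rewrite det_mx22 !mxE !big_ord_recl !big_ord0 /= !mxE /=.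
have ss : s * s = 1 - c * c by rewrite -!expr2 s2.
rewrite (_ : _ * _ - _ * _ = (x - l) * ((2 - x) - l)); last first.
  rewrite !mulr1n !mulr0n.
  transitivity ((1 + c * c - l) * (s * s - l) - c * c * (s * s)); first by ring.
  by rewrite ss /c; ring.
rewrite mulf_eq0 !subr_eq0 ![_ == l]eq_sym.
have [->|//] := eqVneq l x.
by rewrite (_ : (x == 2 - x) = false) //; apply/negbTE/eqP; lra.
Qed.

Lemma realizable_pairs (m : R -> nat) (t : seq R) :
  (forall x, x \in t -> 0 < x < 1) ->
  realizable (\sum_(x <- t) m x * 2) (\sum_(x <- t) m x) (\sum_(x <- t) m x)
    (fun l => \sum_(x <- t) m x * ((l == x) + (l == (2 - x)%R)))%N.
Proof.
elim: t => [|x t IHt] t01.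
  by apply: (realizable_eq realizable0) => *; rewrite big_nil.
have t01_tail y : y \in t -> 0 < y < 1 by move=> yt; apply: t01; rewrite inE yt orbT.
have := realizable_add (realizable_muln (m x) (realizable_pair (t01 x (mem_head x t))))
  (IHt t01_tail).
by move/realizable_eq; apply; rewrite ?big_cons ?muln1 // => l; rewrite big_cons.
Qed.

Section Converse.
Variables (m : R -> nat) (t : seq R).
Hypotheses (m_range : forall l, (0 < m l)%N -> 0 <= l <= 2)
  (m_sym : forall l, 0 < l < 2 -> m l = m (2 - l))
  (t_uniq : uniq t) (t01 : forall x, x \in t -> 0 < x < 1)
  (t_supp : forall x, 0 < x < 1 -> (0 < m x)%N -> x \in t).

Lemma sum_mul_eq_01 l :
  (\sum_(x <- t) m x * (l == x))%N = if 0 < l < 1 then m l else 0%N.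
Proof.
rewrite sum_mul_eq_mem //; case: ifP => [/t01 -> //|lt].
by case: ifP => // l01; case: (posnP (m l)) => // ml; rewrite t_supp in lt.
Qed.

Lemma mult_decomp l : m l = (m 0%R * (l == 0%R) + m 1%R * (l == 1%R) + m 2%R * (l == 2%R)
  + (if (0 < l < 1)%R then m l else 0) + (if (1 < l < 2)%R then m l else 0))%N.
Proof.
have [l_0|l_n0] := eqVneq l 0; have [l_1|l_n1] := eqVneq l 1;
  have [l_2|l_n2] := eqVneq l 2; try by exfalso; lra.
- by rewrite !ifF ?l_0 ?muln1 ?muln0 ?addn0 //; apply/negbTE/negP => /andP[]; lra.
- by rewrite !ifF ?l_1 ?muln1 ?muln0 ?addn0 //; apply/negbTE/negP => /andP[]; lra.
- by rewrite !ifF ?l_2 ?muln1 ?muln0 ?addn0 //; apply/negbTE/negP => /andP[]; lra.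
rewrite !muln0 !add0n.
case: (posnP (m l)) => [->|/m_range/andP[l0 l2]]; first by rewrite !if_same.
have {}l0 : 0 < l by rewrite lt_def l_n0.
have {}l2 : l < 2 by rewrite lt_def eq_sym l_n2.
have [l1|l1|l1] := ltrgtP l 1; rewrite ?l0 ?l2 ?addn0 //.
by rewrite l1 eqxx in l_n1.
Qed.

Lemma sum_mul_eq_pairs l :
  (\sum_(x <- t) m x * ((l == x) + (l == (2 - x)%R)))%N =
  ((if (0 < l < 1)%R then m l else 0) + (if (1 < l < 2)%R then m l else 0))%N.
Proof.
rewrite (eq_bigr _ (fun x _ => mulnDr _ _ _)) big_split /= sum_mul_eq_01.
have l_sym x : (l == 2 - x) = (2 - l == x) by apply/eqP/eqP => [->|<-]; ring.
under eq_bigr do rewrite l_sym.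
rewrite sum_mul_eq_01; congr (_ + _).
have -> : (0 < 2 - l < 1) = (1 < l < 2) by apply/andP/andP => -[? ?]; split; lra.
by case: ifP => // /andP[l1 l2]; rewrite [RHS]m_sym //; apply/andP; split; lra.
Qed.

Lemma realizable_of_range_sym a1 a2 : (a1 + a2 = m 1)%N ->
  realizable (m 0 + m 1 + m 2 + (\sum_(x <- t) m x) * 2)
    (m 2 + a1 + \sum_(x <- t) m x) (m 2 + a2 + \sum_(x <- t) m x) m.
Proof.
move=> a12.
have := realizable_add (realizable_scalar (m 0) false false)
  (realizable_add (realizable_scalar (m 2) true true)
  (realizable_add (realizable_scalar a1 true false)
  (realizable_add (realizable_scalar a2 false true) (realizable_pairs m t01)))).
move/realizable_eq; apply; rewrite -?big_distrl /=; try lia.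
move=> l; rewrite [RHS]mult_decomp sum_mul_eq_pairs !addr0 add0r.
by rewrite (_ : 1 + 1 = 2 :> R) // -a12; ring.
Qed.

End Converse.

Lemma sum_on_02_eq_inj (f g : R -> nat) N1 N2 :
  (forall l, f l = g l) -> sum_on_02_eq f N1 -> sum_on_02_eq g N2 -> N1 = N2.
Proof.
move=> fg [s [sU s02 sf <-]] [t [tU t02 tg <-]].
rewrite (eq_bigr _ (fun l _ => fg l)); apply: eq_sum_support => // l gl.
by apply/idP/idP => [/s02 l02|/t02 l02]; [apply: tg|apply: sf]; rewrite ?fg.
Qed.

Theorem mult_conditions_realizable N p q (m : R -> nat) :
  mult_conditions N p q m -> realizable N p q m.
Proof.
move=> [m_range msum m1 m_sym m0_m2]; have [s [sU s02 s_supp _]] := msum.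
pose t := [seq x <- s | 0 < x < 1]; pose k := (\sum_(x <- t) m x)%N.
have t01 x : x \in t -> 0 < x < 1 by rewrite mem_filter => /andP[].
have t_supp x : 0 < x < 1 -> (0 < m x)%N -> x \in t.
  move=> /[dup] x01 /andP[? ?] mx.
  by rewrite mem_filter x01 s_supp //; apply/andP; split; lra.
have realize := realizable_of_range_sym m_range m_sym (filter_uniq _ sU) t01 t_supp.
(* Any realization of m has dimension N by (ii), which pins down N. *)
have dimN : N = (m 0%R + m 1%R + m 2%R + k * 2)%N.
  have [P [Q [oP oQ _ _ PQm]]] := realize _ 0%N (addn0 (m 1)).
  have [_ PQsum _ _ _] := sum_proj_mult_conditions oP oQ.
  exact: sum_on_02_eq_inj (fun l => esym (PQm l)) msum PQsum.
have a12 : (p - m 2%R - k + (q - m 2%R - k) = m 1%R)%N by move: m1 m0_m2; lia.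
by apply: (realizable_eq (realize _ _ a12)); rewrite -/t -/k //; move: m1 m0_m2; lia.
Qed.

End Realization.

Theorem lemma3p2 (R : realType) :
  (forall (N : nat) (P Q : 'M[R]_N),
      orth_proj P -> orth_proj Q ->
      mult_conditions N (\rank P) (\rank Q) (mult (P + Q)))
  /\
  (forall (N p q : nat) (m : R -> nat),
      (p <= N)%N -> (q <= N)%N -> mult_conditions N p q m ->
      exists P Q : 'M[R]_N,
        [/\ orth_proj P, orth_proj Q, \rank P = p, \rank Q = q
          & forall l : R, mult (P + Q) l = m l]).
Proof.
split; first exact: sum_proj_mult_conditions.
(* The bounds p, q <= N are consequences of (iii) and (v). *)
by move=> N p q m _ _ /mult_conditions_realizable.
Qed.
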